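(* Let $\theta=(\{X_s\}_{s\in\mathcal{S}},\{\theta_s\}_{s\in\mathcal{S}})$ be an ordered partial action of an inverse semigroupoid $\mathcal{S}$ on a semilatticeoid $X$ equipped with its natural partial order. Then for each $s\in\mathcal{S}$: (a) $X_s$ is an ideal of $X$, i.e. if $x\in X$, $y\in X_s$ and $(x,y)\in X^{(2)}$ then $xy\in X_s$; (b) $\theta_s$ is a morphism, i.e. for all $x,y\in X_{s^*}$ with $(x,y)\in X^{(2)}$ we have $(\theta_s(x),\theta_s(y))\in X^{(2)}$ and $\theta_s(xy)=\theta_s(x)\theta_s(y)$.
   Context: Inverse semigroupoid: arrows $\mathcal{S}$, objects $\mathcal{S}^{(0)}$, maps $d,c$, associative multiplication on $\mathcal{S}^{(2)}=\{(s,t):d(s)=c(t)\}$ with $d(st)=d(t)$, $c(st)=c(s)$, and unique $s^*$ with $ss^*s=s$, $s^*ss^*=s^*$; natural partial order on parallel arrows: $s\leqslant t$ iff $s=te$ for an idempotent $e$ with $(t,e)\in\mathcal{S}^{(2)}$. A semilatticeoid is an inverse semigroupoid $X$ all of whose elements are idempotent; equivalently a disjoint union of meet semilattices $X_u$, $u\in X^{(0)}$, where $(x,y)\in X^{(2)}$ iff $x,y$ lie over the same object and $xy$ is their meet; the natural order is $x\leqslant y$ iff $x=xy$ (same object). A partial action of $\mathcal{S}$ on a set $X$ is a pair $(\{X_s\},\{\theta_s\})$ of subsets $X_s\subseteq X$ and maps $\theta_s:X_{s^*}\to X_s$ such that: each $\theta_s$ is a bijection with $\theta_s^{-1}=\theta_{s^*}$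 and $X=\bigcup_s X_s$; $\theta_s\circ\theta_t\subseteq\theta_{st}$ as partial maps for $(s,t)\in\mathcal{S}^{(2)}$; $X_s\subseteq X_t$ whenever $s\leqslant t$. For a poset $X$ it is ordered if each $X_s$ is an order ideal and each $\theta_s$ an order isomorphism. *)

Set Implicit Arguments.

(** The multiplication is a total function on the
    carrier, but all axioms only constrain it on composable pairs
    S^(2) = {(s,t) : dom s = cod t}; values outside S^(2) are irrelevant. *)
Record InvSemigroupoid := {
  arr :> Type;
  obj : Type;
  dom : arr -> obj;
  cod : arr -> obj;
  mul : arr -> arr -> arr;
  star : arr -> arr;
  dom_mul : forall s t, dom s = cod t -> dom (mul s t) = dom t;
  cod_mul : forall s t, dom s = cod t -> cod (mul s t) = cod s;
  mul_assoc : forall s t u, dom s = cod t -> dom t = cod u ->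
    mul (mul s t) u = mul s (mul t u);
  dom_star : forall s, dom (star s) = cod s;
  cod_star : forall s, cod (star s) = dom s;
  star_l : forall s, mul (mul s (star s)) s = s;
  star_r : forall s, mul (mul (star s) s) (star s) = star s;
  star_unique : forall s t, dom s = cod t -> dom t = cod s ->
    mul (mul s t) s = s -> mul (mul t s) t = t -> t = star s
}.

Arguments dom {_} _.
Arguments cod {_} _.
Arguments mul {_} _ _.
Arguments star {_} _.

Definition composable {S : InvSemigroupoid} (s t : S) : Prop := dom s = cod t.

Definition idempotent {S : InvSemigroupoid} (e : S) : Prop :=
  composable e e /\ mul e e = e.

Definition nat_le {S : InvSemigroupoid} (s t : S) : Prop :=
  exists e, idempotent e /\ composable t e /\ s = mul t e.

Record Semilatticeoid := {
  slo :> InvSemigroupoid;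
  slo_idem : forall x : slo, idempotent x
}.

(** Partial action of S on a set X. Each theta s is represented by a total
    function X -> X, of which only the restriction to X_{s*} matters. *)
Record PartialAction (S : InvSemigroupoid) (X : Type) := {
  pdom : S -> X -> Prop;
  theta : S -> X -> X;
  theta_maps : forall s x, pdom (star s) x -> pdom s (theta s x);
  theta_inv_l : forall s x, pdom (star s) x -> theta (star s) (theta s x) = x;
  theta_inv_r : forall s y, pdom s y -> theta s (theta (star s) y) = y;
  pdom_cover : forall x, exists s, pdom s x;
  theta_comp : forall s t x, composable s t ->
    pdom (star t) x -> pdom (star s) (theta t x) ->
    pdom (star (mul s t)) x /\ theta (mul s t) x = theta s (theta t x);
  pdom_mono : forall s t, nat_le s t -> forall x, pdom s x -> pdom t x
}.

Definition ordered_action {S : InvSemigroupoid} {X : Semilatticeoid}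
  (A : PartialAction S X) : Prop :=
  forall s,
    (forall x y : X, nat_le x y -> pdom A s y -> pdom A s x) /\
    (forall x y : X, pdom A (star s) x -> pdom A (star s) y ->
       (nat_le x y <-> nat_le (theta A s x) (theta A s y))).


(* Each [X_s] is an order ideal and each [theta_s] an order isomorphism, so it
   suffices to see that in a semilatticeoid the product [x y] of composable
   elements is their meet for the natural order.  Then [x y <= y] puts [x y]
   into the ideal [X_s], and an order isomorphism between order ideals of
   meet semilattices preserves meets: [theta_s (x y)] is a lower bound of
   [theta_s x] and [theta_s y], while pulling back their meet along
   [theta_{s*}] gives a lower bound of [x] and [y], hence of [x y]. *)

Lemma star_involutive (S : InvSemigroupoid) (s : S) : star (star s) = s.
Proof.
  symmetry; apply star_unique.
  - apply dom_star.
  - symmetry; apply cod_star.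
  - apply star_r.
  - apply star_l.
Qed.

Section Semilatticeoid.

Variable X : Semilatticeoid.
Implicit Types (o : obj X) (w x y z : X).

Lemma slo_dom_cod x : dom x = cod x.
Proof. exact (proj1 (slo_idem X x)). Qed.

Lemma slo_mulxx x : mul x x = x.
Proof. exact (proj2 (slo_idem X x)). Qed.

Lemma slo_star x : star x = x.
Proof. symmetry; apply star_unique; rewrite ?slo_mulxx; easy || apply slo_dom_cod. Qed.

Lemma slo_composableE x y : composable x y <-> dom x = dom y.
Proof. unfold composable; rewrite (slo_dom_cod y); tauto. Qed.

Definition over o x : Prop := dom x = o.

Lemma over_dom x : over (dom x) x.
Proof. reflexivity. Qed.

Lemma over_mul o x y : over o x -> over o y -> over o (mul x y).
Proof.
  unfold over; intros Hx Hy; rewrite dom_mul; [exact Hy|].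
  rewrite <- slo_dom_cod; congruence.
Qed.

Hint Resolve over_mul : core.

Lemma slo_mulA o x y z : over o x -> over o y -> over o z ->
  mul (mul x y) z = mul x (mul y z).
Proof.
  unfold over; intros; apply mul_assoc; rewrite <- slo_dom_cod; congruence.
Qed.

Lemma slo_mulKl o x z : over o x -> over o z -> mul x (mul x z) = mul x z.
Proof. intros; rewrite <- (slo_mulA o) by auto; now rewrite slo_mulxx. Qed.

(* [y x] satisfies the defining equations of the inverse of [x y], and every
   element of a semilatticeoid is its own inverse. *)
Lemma slo_mulC o x y : over o x -> over o y -> mul x y = mul y x.
Proof.
  intros Hx Hy.
  assert (Hxy : over o (mul x y)) by auto.
  assert (Hyx : over o (mul y x)) by auto.
  rewrite <- (slo_star (mul x y)); symmetry; apply star_unique;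
    try (rewrite <- slo_dom_cod; unfold over in *; congruence).
  - rewrite !(slo_mulA o) by auto.
    rewrite (slo_mulKl o y), (slo_mulKl o x) by auto.
    rewrite <- (slo_mulA o x y) by auto; apply slo_mulxx.
  - rewrite !(slo_mulA o) by auto.
    rewrite (slo_mulKl o x), (slo_mulKl o y) by auto.
    rewrite <- (slo_mulA o y x) by auto; apply slo_mulxx.
Qed.

Lemma nat_le_slo w x : nat_le w x <-> dom w = dom x /\ mul w x = w.
Proof.
  split.
  - intros [e [_ [Hxe ->]]].
    apply slo_composableE in Hxe.
    assert (Hx : over (dom x) x) by apply over_dom.
    assert (Ho : over (dom x) e) by (symmetry; exact Hxe).
    split; [apply over_mul; auto|].
    rewrite (slo_mulA (dom x)), (slo_mulC (dom x) e x), (slo_mulKl (dom x)) by auto.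
    reflexivity.
  - intros [Hwx Hw]; exists w; split; [apply slo_idem|]; split.
    + apply slo_composableE; symmetry; exact Hwx.
    + transitivity (mul w x); [symmetry; exact Hw|].
      apply (slo_mulC (dom w)); [apply over_dom | symmetry; exact Hwx].
Qed.

Lemma nat_le_dom w x : nat_le w x -> dom w = dom x.
Proof. now intros [? _]%nat_le_slo. Qed.

Lemma nat_le_antisym x y : nat_le x y -> nat_le y x -> x = y.
Proof.
  intros [Hxy Ex]%nat_le_slo [_ Ey]%nat_le_slo.
  rewrite <- Ex, (slo_mulC (dom x)); [exact Ey | apply over_dom | symmetry; exact Hxy].
Qed.

Section Meet.

Variables x y : X.
Hypothesis Hxy : composable x y.

Let Hx : over (dom x) x := over_dom x.
Let Hy : over (dom x) y := eq_sym (proj1 (slo_composableE x y) Hxy).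

Lemma mul_le_l : nat_le (mul x y) x.
Proof.
  apply nat_le_slo; split; [apply over_mul; auto|].
  rewrite (slo_mulC (dom x) x y), (slo_mulA (dom x)), slo_mulxx by auto; reflexivity.
Qed.

Lemma mul_le_r : nat_le (mul x y) y.
Proof.
  apply nat_le_slo; split; [rewrite Hy; apply over_mul; auto|].
  rewrite (slo_mulA (dom x)), slo_mulxx by auto; reflexivity.
Qed.

Lemma le_mul w : nat_le w x -> nat_le w y -> nat_le w (mul x y).
Proof.
  intros [Hwx Ex]%nat_le_slo [_ Ey]%nat_le_slo.
  apply nat_le_slo; split; [rewrite Hwx; symmetry; apply over_mul; auto|].
  rewrite <- (slo_mulA (dom x)), Ex, Ey by auto; reflexivity.
Qed.

End Meet.

End Semilatticeoid.

Section OrderedAction.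

Variables (S : InvSemigroupoid) (X : Semilatticeoid) (A : PartialAction S X).
Hypothesis ordA : ordered_action A.

Lemma pdom_ideal s (x y : X) : pdom A s y -> composable x y -> pdom A s (mul x y).
Proof. intros Hy Hxy; apply (proj1 (ordA s) _ y); [apply mul_le_r; exact Hxy | exact Hy]. Qed.

Lemma theta_le_iff s (x y : X) : pdom A (star s) x -> pdom A (star s) y ->
  (nat_le x y <-> nat_le (theta A s x) (theta A s y)).
Proof. exact (proj2 (ordA s) x y). Qed.

Section Morphism.

Variables (s : S) (x y : X).
Hypotheses (Hx : pdom A (star s) x) (Hy : pdom A (star s) y) (Hxy : composable x y).

Let Hmul : pdom A (star s) (mul x y) := pdom_ideal _ _ _ Hy Hxy.

Lemma theta_mul_le_l : nat_le (theta A s (mul x y)) (theta A s x).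
Proof. apply theta_le_iff; auto; apply mul_le_l; exact Hxy. Qed.

Lemma theta_mul_le_r : nat_le (theta A s (mul x y)) (theta A s y).
Proof. apply theta_le_iff; auto; apply mul_le_r; exact Hxy. Qed.

Lemma theta_composable : composable (theta A s x) (theta A s y).
Proof.
  apply slo_composableE.
  rewrite <- (nat_le_dom _ _ _ theta_mul_le_l); apply nat_le_dom, theta_mul_le_r.
Qed.

Lemma theta_mul : theta A s (mul x y) = mul (theta A s x) (theta A s y).
Proof.
  set (z := mul (theta A s x) (theta A s y)).
  assert (Hz : pdom A s z) by (apply pdom_ideal; [apply theta_maps, Hy | apply theta_composable]).
  assert (Hw : pdom A (star s) (theta A (star s) z))
    by (apply theta_maps; rewrite star_involutive; exact Hz).
  assert (Ez : theta A s (theta A (star s) z) = z) by (apply theta_inv_r; exact Hz).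
  assert (Hwxy : nat_le (theta A (star s) z) (mul x y)).
  { apply le_mul; [exact Hxy | |]; apply (theta_le_iff s); auto; rewrite Ez.
    - apply mul_le_l, theta_composable.
    - apply mul_le_r, theta_composable. }
  apply nat_le_antisym.
  - apply le_mul; [apply theta_composable | apply theta_mul_le_l | apply theta_mul_le_r].
  - rewrite <- Ez; apply theta_le_iff; auto.
Qed.

End Morphism.

End OrderedAction.

Theorem mainTheorem8 (S : InvSemigroupoid) (X : Semilatticeoid)
  (A : PartialAction S X) :
  ordered_action A ->
  forall s : S,
    (forall x y : X, pdom A s y -> composable x y -> pdom A s (mul x y)) /\
    (forall x y : X, pdom A (star s) x -> pdom A (star s) y -> composable x y ->
       composable (theta A s x) (theta A s y) /\
       theta A s (mul x y) = mul (theta A s x) (theta A s y)).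
Proof.
  intros ordA s; split.
  - exact (pdom_ideal _ _ _ ordA s).
  - intros x y Hx Hy Hxy; split.
    + now apply theta_composable.
    + now apply theta_mul.
Qed.
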